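(* Let $\mathcal{E}$ be the variety of loops described in the context, let $n\ge3$, let $\mathcal{F}_n\in\mathcal{E}$ be the free loop of $\mathcal{E}$ on $n$ generators, and let $M_3$ be the free loop of $\mathcal{E}$ on $3$ generators (the free code loop with 3 generators). Then $\mathcal{F}_n$ can be embedded (by an injective loop homomorphism) in a direct product of copies of $M_3$.
   Context: A loop is a set with a binary operation $xy$ such that any two of $x,y,z$ in $xy=z$ determine the third uniquely, and with a two-sided identity $1$. It is Moufang if $((xy)x)z=x(y(xz))$ for all $x,y,z$. The loop commutator $[x,y]$ is the unique element with $xy=(yx)[x,y]$, and the associator $(x,y,z)$ the unique element with $(xy)z=(x(yz))(x,y,z)$. $\mathcal{E}$ is the variety of Moufang loops satisfying the identities $x^4=1$, $[x,y]^2=1$, $(x,y,z)^2=1$, $[x^2,y]=1$, $[[x,y],t]=1$, $[(x,y,z),t]=1$, $(x^2,y,z)=1$, $([x,y],z,t)=1$, $((x,y,z),t,s)=1$; it is the variety generated by all code loops (Moufang loops $L$ with a central subgroup $A$ of order 2 such that $L/A$ is an elementary abelian 2-group). *)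

From mathcomp Require Import all_boot.
From Stdlib Require Import FunctionalExtensionality.

Set Implicit Arguments.
Unset Strict Implicit.
Unset Printing Implicit Defensive.

(* Unique solvability is
   encoded (equivalently, as usual) by left/right division operations. *)
Record loop := Loop {
  lcarrier :> Type;
  lmul : lcarrier -> lcarrier -> lcarrier;
  lone : lcarrier;
  lldiv : lcarrier -> lcarrier -> lcarrier;  (* lldiv a b = a \ b *)
  lrdiv : lcarrier -> lcarrier -> lcarrier;  (* lrdiv b a = b / a *)
  lmul1l : forall x, lmul lone x = x;
  lmul1r : forall x, lmul x lone = x;
  lmul_ldiv : forall a b, lmul a (lldiv a b) = b;
  lldiv_mul : forall a b, lldiv a (lmul a b) = b;
  lmul_rdiv : forall a b, lmul (lrdiv b a) a = b;
  lrdiv_mul : forall a b, lrdiv (lmul b a) a = b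
}.

Arguments lmul {l}.
Arguments lone {l}.
Arguments lldiv {l}.
Arguments lrdiv {l}.

Section LoopDefs.
Variable L : loop.
Local Notation "x * y" := (lmul x y).
Local Notation "1" := (@lone L).

Definition moufang : Prop :=
  forall x y z : L, ((x * y) * x) * z = x * (y * (x * z)).

Definition lcomm (x y : L) : L := lldiv (y * x) (x * y).
Definition lassoc (x y z : L) : L := lldiv (x * (y * z)) ((x * y) * z).

Definition lsq (x : L) : L := x * x.

Definition in_E : Prop :=
  moufang /\
  (forall x : L, lsq (lsq x) = 1) /\
  (forall x y : L, lsq (lcomm x y) = 1) /\
  (forall x y z : L, lsq (lassoc x y z) = 1) /\
  (forall x y : L, lcomm (lsq x) y = 1) /\
  (forall x y t : L, lcomm (lcomm x y) t = 1) /\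
  (forall x y z t : L, lcomm (lassoc x y z) t = 1) /\
  (forall x y z : L, lassoc (lsq x) y z = 1) /\
  (forall x y z t : L, lassoc (lcomm x y) z t = 1) /\
  (forall x y z t s : L, lassoc (lassoc x y z) t s = 1).

End LoopDefs.

Definition loop_hom (L1 L2 : loop) (h : L1 -> L2) : Prop :=
  forall x y : L1, h (lmul x y) = lmul (h x) (h y).

Definition free_E_loop (n : nat) (F : loop) (g : 'I_n -> F) : Prop :=
  in_E F /\
  forall (L : loop), in_E L -> forall f : 'I_n -> L,
    exists h : F -> L,
      loop_hom h /\ (forall i, h (g i) = f i) /\
      (forall h' : F -> L, loop_hom h' -> (forall i, h' (g i) = f i) ->
         forall x, h' x = h x).

Section Power.
Variables (M : loop) (I : Type).

Definition pw_mul (a b : I -> M) : I -> M := fun i => lmul (a i) (b i).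
Definition pw_one : I -> M := fun _ => lone.
Definition pw_ldiv (a b : I -> M) : I -> M := fun i => lldiv (a i) (b i).
Definition pw_rdiv (a b : I -> M) : I -> M := fun i => lrdiv (a i) (b i).

Lemma pw_mul1l x : pw_mul pw_one x = x.
Proof. apply: functional_extensionality => i; exact: lmul1l. Qed.
Lemma pw_mul1r x : pw_mul x pw_one = x.
Proof. apply: functional_extensionality => i; exact: lmul1r. Qed.
Lemma pw_mul_ldiv a b : pw_mul a (pw_ldiv a b) = b.
Proof. apply: functional_extensionality => i; exact: lmul_ldiv. Qed.
Lemma pw_ldiv_mul a b : pw_ldiv a (pw_mul a b) = b.
Proof. apply: functional_extensionality => i; exact: lldiv_mul. Qed.
Lemma pw_mul_rdiv a b : pw_mul (pw_rdiv b a) a = b.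
Proof. apply: functional_extensionality => i; exact: lmul_rdiv. Qed.
Lemma pw_rdiv_mul a b : pw_rdiv (pw_mul b a) a = b.
Proof. apply: functional_extensionality => i; exact: lrdiv_mul. Qed.

Definition power_loop : loop :=
  @Loop (I -> M) pw_mul pw_one pw_ldiv pw_rdiv
    pw_mul1l pw_mul1r pw_mul_ldiv pw_ldiv_mul pw_mul_rdiv pw_rdiv_mul.

End Power.

(* In an E-loop every square, commutator and associator is a central involution,
   the associator is a symmetric trilinear form, and
   [(xy)^2 = x^2 y^2 [x,y]],  [[xy,z] = [x,z] [y,z] (x,y,z)].
   Hence in the free E-loop F on generators g_i, every element whose image in the
   abelianization F -> Z_2^n is trivial is a product of the basic elements g_i^2,
   [g_i,g_j] (i < j) and (g_i,g_j,g_k) (i < j < k).  A nontrivial x in F is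
   therefore either detected by a map to Z_2 sending one generator to 1, or it is
   such a product in which some basic element occurs an odd number of times; that
   element is detected by a map to a code loop of order 16 which is nontrivial on
   at most three generators.  Both kinds of maps factor through M_3, so the maps
   F -> M_3 separate the points of F and jointly embed F into a power of M_3. *)

From HB Require Import structures.
From mathcomp Require Import all_boot.
From Stdlib Require Import FunctionalExtensionality ProofIrrelevance.
From mathcomp Require Import zify.

Set Implicit Arguments.
Unset Strict Implicit.
Unset Printing Implicit Defensive.

Section LoopBasics.
Variable L : loop.
Local Notation "x * y" := (@lmul L x y).
Local Notation "1" := (@lone L).

Lemma lmulI (x : L) : injective (lmul x).
Proof. by move=> y z e; rewrite -(lldiv_mul x y) e lldiv_mul. Qed.

Lemma lmulIr (x : L) : injective (lmul^~ x).
Proof. by move=> y z e; rewrite -(lrdiv_mul x y) /= e lrdiv_mul. Qed.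

Lemma lmulI_eq (u v a b : L) : u = v -> u * a = v * b -> a = b.
Proof. by move=> ->; apply: lmulI. Qed.

Lemma lldiv_eq (x y z : L) : x * y = z -> lldiv x z = y.
Proof. by move<-; rewrite lldiv_mul. Qed.

Lemma lldivv (x : L) : lldiv x x = 1.
Proof. by apply: lldiv_eq; rewrite lmul1r. Qed.

Lemma lassocE (x y z : L) : (x * y) * z = (x * (y * z)) * lassoc x y z.
Proof. by rewrite /lassoc lmul_ldiv. Qed.

Lemma lcommE (x y : L) : x * y = (y * x) * lcomm x y.
Proof. by rewrite /lcomm lmul_ldiv. Qed.

Lemma lassoc1l (y z : L) : lassoc 1 y z = 1.
Proof. by rewrite /lassoc !lmul1l lldivv. Qed.

Lemma lassoc1m (x z : L) : lassoc x 1 z = 1.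
Proof. by rewrite /lassoc lmul1l lmul1r lldivv. Qed.

Lemma lassoc1r (x y : L) : lassoc x y 1 = 1.
Proof. by rewrite /lassoc !lmul1r lldivv. Qed.

Lemma lcomm1l (y : L) : lcomm 1 y = 1.
Proof. by rewrite /lcomm lmul1l lmul1r lldivv. Qed.

Lemma lcomm1r (x : L) : lcomm x 1 = 1.
Proof. by rewrite /lcomm lmul1l lmul1r lldivv. Qed.

Lemma lcommxx (x : L) : lcomm x x = 1.
Proof. exact: lldivv. Qed.

Lemma lsq1 : lsq 1 = 1.
Proof. by rewrite /lsq lmul1l. Qed.

End LoopBasics.

Section LoopHom.
Variables (L1 L2 : loop) (h : L1 -> L2).
Hypothesis hom_h : loop_hom h.

Lemma loop_hom1 : h lone = lone.
Proof. by apply: (@lmulI _ (h lone)); rewrite lmul1r -hom_h lmul1l. Qed.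

Lemma loop_hom_ldiv a b : h (lldiv a b) = lldiv (h a) (h b).
Proof. by symmetry; apply: lldiv_eq; rewrite -hom_h lmul_ldiv. Qed.

Lemma loop_hom_rdiv a b : h (lrdiv b a) = lrdiv (h b) (h a).
Proof. by apply: (@lmulIr _ (h a)); rewrite /= -hom_h !lmul_rdiv. Qed.

Lemma loop_hom_comm a b : h (lcomm a b) = lcomm (h a) (h b).
Proof. by rewrite /lcomm loop_hom_ldiv !hom_h. Qed.

Lemma loop_hom_assoc a b c : h (lassoc a b c) = lassoc (h a) (h b) (h c).
Proof. by rewrite /lassoc loop_hom_ldiv !hom_h. Qed.

Lemma loop_hom_sq a : h (lsq a) = lsq (h a).
Proof. by rewrite /lsq hom_h. Qed.

End LoopHom.

Lemma loop_hom_comp (L1 L2 L3 : loop) (h : L1 -> L2) (k : L2 -> L3) :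
  loop_hom h -> loop_hom k -> loop_hom (k \o h).
Proof. by move=> hom_h hom_k x y /=; rewrite hom_h hom_k. Qed.

(** * Central involutions *)

Section CentralInvolutions.
Variable L : loop.
Hypothesis mouf : moufang L.
Local Notation "x * y" := (@lmul L x y).
Local Notation "1" := (@lone L).

Definition central_inv (c : L) : Prop :=
  [/\ forall y, c * y = y * c, forall y z, (c * y) * z = c * (y * z) & c * c = 1].

Lemma central_inv1 : central_inv 1.
Proof. by split=> [y|y z|]; rewrite ?lmul1l ?lmul1r. Qed.

Section OneCentral.
Variable c : L.
Hypothesis c_central : central_inv c.

Lemma centralC y : c * y = y * c. Proof. by case: c_central. Qed.
Lemma centralA y z : (c * y) * z = c * (y * z). Proof. by case: c_central. Qed.
Lemma centralK : c * c = 1. Proof. by case: c_central. Qed.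

(* The Moufang identity with [x := c] moves [c] through the middle. *)
Lemma centralAm y z : (y * c) * z = y * (c * z).
Proof. by apply: (@lmulI _ c); rewrite -mouf [in RHS]centralA [in RHS]centralA. Qed.

Lemma centralAr y z : (y * z) * c = y * (z * c).
Proof. by rewrite -centralC -centralA centralC centralAm centralC. Qed.

Lemma centralAC x y : (x * c) * y = (x * y) * c.
Proof. by rewrite centralAm centralC centralAr. Qed.

Lemma centralKr x : (x * c) * c = x.
Proof. by rewrite centralAr centralK lmul1r. Qed.

End OneCentral.

Lemma central_invM c d : central_inv c -> central_inv d -> central_inv (c * d).
Proof.
move=> Hc Hd; split=> [y|y z|].
- by rewrite (centralA Hc) (centralC Hd) -(centralA Hc) (centralC Hc) (centralAm Hc).
- by rewrite !(centralA Hc) (centralA Hd).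
- by rewrite (centralA Hc) -(centralA Hd) -(centralC Hc) (centralKr Hd) (centralK Hc).
Qed.

Lemma central_inv_eq c d : central_inv d -> c * d = 1 -> c = d.
Proof. by move=> Hd e; rewrite -[c](centralKr Hd) e lmul1l. Qed.

Definition all_central (ctx : seq L) : Prop := foldr (fun x P => central_inv x /\ P) True ctx.

Lemma all_central_nth ctx i : all_central ctx -> central_inv (nth 1 ctx i).
Proof.
elim: ctx i => [|x ctx IH] [|i] /= => [_|_|[]|[_ /IH]] //; exact: central_inv1.
Qed.

(* Words in central involutions are evaluated in the elementary abelian
   2-group they generate: only the parity of each atom matters. *)
Inductive cword := CAtom of nat | COne | CMul of cword & cword.

Fixpoint cword_eval (ctx : seq L) (w : cword) : L :=
  match w with
  | CAtom i => nth 1 ctx i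
  | COne => 1
  | CMul u v => cword_eval ctx u * cword_eval ctx v
  end.

Fixpoint xorseq (s t : seq bool) : seq bool :=
  match s, t with
  | [::], _ => t
  | _, [::] => s
  | a :: s', b :: t' => (a (+) b) :: xorseq s' t'
  end.

Fixpoint cword_parity (w : cword) : seq bool :=
  match w with
  | CAtom i => rcons (nseq i false) true
  | COne => [::]
  | CMul u v => xorseq (cword_parity u) (cword_parity v)
  end.

Fixpoint cparity_eval (ctx : seq L) (p : seq bool) : L :=
  if p is b :: p' then (if b then head 1 ctx else 1) * cparity_eval (behead ctx) p' else 1.

Lemma all_central_behead ctx : all_central ctx -> all_central (behead ctx).
Proof. by case: ctx => //= x ctx []. Qed.

Lemma central_inv_cparity_eval ctx p : all_central ctx -> central_inv (cparity_eval ctx p).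
Proof.
elim: p ctx => [|b p IH] ctx Hctx /=; first exact: central_inv1.
apply: central_invM; last exact/IH/all_central_behead.
by case: b; [exact: (all_central_nth 0 Hctx) | exact: central_inv1].
Qed.

Lemma cparity_eval_xorseq ctx s t : all_central ctx ->
  cparity_eval ctx (xorseq s t) = cparity_eval ctx s * cparity_eval ctx t.
Proof.
elim: s t ctx => [|a s IH] [|b t] ctx Hctx /=; rewrite ?lmul1l ?lmul1r //.
have Hx := all_central_nth 0 Hctx; have Hbh := all_central_behead Hctx.
have HP := central_inv_cparity_eval s Hbh; have HQ := central_inv_cparity_eval t Hbh.
rewrite IH //; case: a; case: b => /=; rewrite ?lmul1l //.
- by rewrite (centralA Hx) -(centralA HP) -(centralC Hx) !(centralA Hx) -(centralA Hx)
     (centralK Hx) lmul1l.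
- by rewrite (centralA Hx).
- by rewrite -(centralA HP) -(centralC Hx) (centralA Hx).
Qed.

Lemma cparity_eval_atom ctx i : cparity_eval ctx (rcons (nseq i false) true) = nth 1 ctx i.
Proof.
elim: i ctx => [|i IH] ctx /=; first by rewrite lmul1r.
by rewrite lmul1l IH; case: ctx => [|x ctx] //=; rewrite !nth_nil.
Qed.

Lemma cword_evalE ctx w : all_central ctx -> cword_eval ctx w = cparity_eval ctx (cword_parity w).
Proof.
move=> Hctx; elim: w => [i||u IHu v IHv] /=; rewrite ?cparity_eval_atom //.
by rewrite cparity_eval_xorseq // IHu IHv.
Qed.

Lemma cparity_eval_false ctx p : all negb p -> cparity_eval ctx p = 1.
Proof. by elim: p ctx => [|b p IH] ctx //= /andP[/negbTE-> /IH->]; rewrite lmul1l. Qed.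

Lemma cword_eq ctx u v : all_central ctx -> all negb (cword_parity (CMul u v)) ->
  cword_eval ctx u = cword_eval ctx v.
Proof.
move=> Hctx even_uv; apply: central_inv_eq.
  by rewrite cword_evalE //; exact: central_inv_cparity_eval.
by have := cparity_eval_false ctx even_uv; rewrite -cword_evalE.
Qed.

End CentralInvolutions.

Lemma central_invP (L : loop) (c : L) : central_inv c <->
  [/\ forall y, lcomm c y = lone, forall y z, lassoc c y z = lone & lsq c = lone].
Proof.
split=> [[cC cA cK]|[c_comm c_assoc c_sq]]; split=> [y|y z|//].
- by rewrite /lcomm cC lldivv.
- by rewrite /lassoc cA lldivv.
- by rewrite lcommE c_comm lmul1r.
- by rewrite lassocE c_assoc lmul1r.
Qed.

Section CentralE.
Variable L : loop.
Hypothesis HE : in_E L.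

Lemma E_moufang : moufang L. Proof. by case: HE. Qed.

Lemma central_inv_sq (x : L) : central_inv (lsq x).
Proof. by case: HE => _ [sq4 [_ [_ [sq_c [_ [_ [sq_a _]]]]]]]; apply/central_invP. Qed.

Lemma central_inv_comm (x y : L) : central_inv (lcomm x y).
Proof. by case: HE => _ [_ [c2 [_ [_ [c_c [_ [_ [c_a _]]]]]]]]; apply/central_invP. Qed.

Lemma central_inv_assoc (x y z : L) : central_inv (lassoc x y z).
Proof. by case: HE => _ [_ [_ [a2 [_ [_ [a_c [_ [_ a_a]]]]]]]]; apply/central_invP. Qed.

End CentralE.

Lemma in_E_of_central (L : loop) : moufang L ->
  (forall x : L, central_inv (lsq x)) -> (forall x y : L, central_inv (lcomm x y)) ->
  (forall x y z : L, central_inv (lassoc x y z)) -> in_E L.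
Proof.
move=> mouf Hs Hc Ha.
have sq x := (central_invP _).1 (Hs x).
have cm x y := (central_invP _).1 (Hc x y).
have ass x y z := (central_invP _).1 (Ha x y z).
split=> //; split; first by move=> x; case: (sq x).
split; first by move=> x y; case: (cm x y).
split; first by move=> x y z; case: (ass x y z).
split; first by move=> x y; case: (sq x).
split; first by move=> x y t; case: (cm x y).
split; first by move=> x y z t; case: (ass x y z).
split; first by move=> x y z; case: (sq x).
split; first by move=> x y z t; case: (cm x y).
by move=> x y z t s; case: (ass x y z).
Qed.


Ltac cword_atoms t acc :=
  lazymatch t with
  | lmul ?a ?b => let acc := cword_atoms a acc in cword_atoms b acc
  | lone => acc
  | _ => lazymatch acc with
         | context [cons t _] => acc
         | _ => constr:(cons t acc)
         end
  end.

Ltac cword_index x l :=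
  lazymatch l with
  | cons x _ => constr:(0)
  | cons _ ?l' => let i := cword_index x l' in constr:(S i)
  end.

Ltac cword_reify t ctx :=
  lazymatch t with
  | lmul ?a ?b =>
    let u := cword_reify a ctx in let v := cword_reify b ctx in constr:(CMul u v)
  | lone => constr:(COne)
  | _ => let i := cword_index t ctx in constr:(CAtom i)
  end.

Ltac central_atom :=
  first [ assumption
        | apply: central_inv_assoc; assumption
        | apply: central_inv_comm; assumption
        | apply: central_inv_sq; assumption ].

(* Solves equations between products of squares, commutators, associators and
   assumed central involutions of an E-loop, by comparing atom parities. *)
Ltac central_norm :=
  lazymatch goal with
  | |- @eq (lcarrier ?L) ?u ?v =>
    let ctx := cword_atoms u (@nil (lcarrier L)) in
    let ctx := cword_atoms v ctx in
    let wu := cword_reify u ctx in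
    let wv := cword_reify v ctx in
    change (cword_eval ctx wu = cword_eval ctx wv);
    apply: cword_eq;
    [ apply: E_moufang; assumption
    | cbn [all_central foldr];
      repeat match goal with |- _ /\ _ => split | |- True => exact I end;
      central_atom
    | vm_compute; reflexivity ]
  end.

Section CentralCongruence.
Variable L : loop.
Hypothesis mouf : moufang L.
Local Notation "x * y" := (@lmul L x y).
Local Notation "1" := (@lone L).
Variable S : L -> Prop.
Hypothesis S1 : S 1.
Hypothesis SM : forall c d, S c -> S d -> S (c * d).
Hypothesis S_central : forall c, S c -> central_inv c.

Definition eqmod (x y : L) : Prop := exists2 c, S c & x = y * c.

Lemma eqmod_refl x : eqmod x x.
Proof. by exists 1; rewrite ?lmul1r. Qed.

Lemma eqmod_sym x y : eqmod x y -> eqmod y x.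
Proof. by case=> c Sc ->; exists c; rewrite ?(centralKr mouf (S_central Sc)). Qed.

Lemma eqmod_trans x y z : eqmod x y -> eqmod y z -> eqmod x z.
Proof.
case=> c Sc -> [d Sd ->]; exists (d * c); first exact: SM.
by rewrite (centralAr mouf (S_central Sc)).
Qed.

Lemma eqmodM x x' y y' : eqmod x x' -> eqmod y y' -> eqmod (x * y) (x' * y').
Proof.
case=> c Sc -> [d Sd ->]; exists (c * d); first exact: SM.
have [Hc Hd] := (S_central Sc, S_central Sd).
by rewrite -(centralAr mouf Hd) (centralAC mouf Hc) (centralAr mouf Hd).
Qed.

Hypothesis S_comm : forall x y, S (lcomm x y).
Hypothesis S_assoc : forall x y z, S (lassoc x y z).
Hypothesis S_sq : forall x, S (lsq x).

Lemma eqmodC x y : eqmod (x * y) (y * x).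
Proof. by exists (lcomm x y); [exact: S_comm | exact: lcommE]. Qed.

Lemma eqmodA x y z : eqmod ((x * y) * z) (x * (y * z)).
Proof. by exists (lassoc x y z); [exact: S_assoc | exact: lassocE]. Qed.

Lemma eqmod_sq x : eqmod (x * x) 1.
Proof. by exists (x * x); [exact: S_sq | rewrite lmul1l]. Qed.

Lemma eqmod_mulAC x y z : eqmod ((x * y) * z) ((x * z) * y).
Proof.
apply: eqmod_trans (eqmodA _ _ _) _.
exact: eqmod_trans (eqmodM (eqmod_refl x) (eqmodC y z)) (eqmod_sym (eqmodA _ _ _)).
Qed.

Lemma eqmod_mul_common x y z : eqmod ((x * z) * (y * z)) (x * y).
Proof.
apply: eqmod_trans (eqmodA _ _ _) _.
apply: eqmod_trans (eqmodM (eqmod_refl x) (eqmod_sym (eqmodA _ _ _))) _.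
apply: eqmod_trans (eqmodM (eqmod_refl x) (eqmodM (eqmodC z y) (eqmod_refl z))) _.
apply: eqmod_trans (eqmodM (eqmod_refl x) (eqmodA _ _ _)) _.
by apply: eqmod_trans (eqmodM (eqmod_refl x) (eqmodM (eqmod_refl y) (eqmod_sq z))) _;
  rewrite lmul1r; exact: eqmod_refl.
Qed.

End CentralCongruence.

(** * The associator calculus of E-loops *)

Section AssociatorCalculus.
Variable L : loop.
Hypothesis HE : in_E L.
Let mouf : moufang L := E_moufang HE.
Local Notation "x * y" := (@lmul L x y).
Local Notation "1" := (@lone L).
Local Notation eqv := (eqmod (@central_inv L)).

Let central_id (c : L) : central_inv c -> central_inv c := id.
Let eqv_refl : forall x, eqv x x := eqmod_refl (central_inv1 L).
Let eqv_sym : forall x y, eqv x y -> eqv y x := eqmod_sym mouf central_id.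
Let eqv_trans : forall x y z, eqv x y -> eqv y z -> eqv x z :=
  eqmod_trans mouf (central_invM mouf) central_id.
Let eqvM : forall x x' y y', eqv x x' -> eqv y y' -> eqv (x * y) (x' * y') :=
  eqmodM mouf (central_invM mouf) central_id.
Let eqvC : forall x y, eqv (x * y) (y * x) := eqmodC (central_inv_comm HE).
Let eqvA : forall x y z, eqv ((x * y) * z) (x * (y * z)) := eqmodA (central_inv_assoc HE).
Let eqv_sq : forall x, eqv (x * x) 1 := eqmod_sq (central_inv_sq HE).

Lemma lassoc_centralMl x y z c : central_inv c -> lassoc (x * c) y z = lassoc x y z.
Proof.
move=> Hc; apply: lldiv_eq.
by rewrite !(centralAC mouf Hc) (lassocE x y z).
Qed.

Lemma lassoc_centralMm x y z c : central_inv c -> lassoc x (y * c) z = lassoc x y z.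
Proof.
move=> Hc; apply: lldiv_eq.
by rewrite !(centralAC mouf Hc) -!(centralAr mouf Hc) !(centralAC mouf Hc) (lassocE x y z).
Qed.

Lemma lassoc_centralMr x y z c : central_inv c -> lassoc x y (z * c) = lassoc x y z.
Proof.
move=> Hc; apply: lldiv_eq.
by rewrite -!(centralAr mouf Hc) (lassocE x y z) (centralAC mouf Hc).
Qed.

Lemma lassoc_eqmod x x' y y' z z' : eqv x x' -> eqv y y' -> eqv z z' ->
  lassoc x y z = lassoc x' y' z'.
Proof.
case=> a Ha -> [b Hb ->] [c Hc ->].
by rewrite lassoc_centralMl // lassoc_centralMm // lassoc_centralMr.
Qed.

Lemma lassocE' (x y z : L) : x * (y * z) = ((x * y) * z) * lassoc x y z.
Proof. by rewrite (lassocE x y z) (centralKr mouf (central_inv_assoc HE x y z)). Qed.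

Lemma lassoc_pentagon x y z w :
  lassoc x y (z * w) * lassoc (x * y) z w =
  (lassoc y z w * lassoc x (y * z) w) * lassoc x y z.
Proof.
(* Both sides compare ((xy)z)w with x(y(zw)), along the two paths of the pentagon. *)
have Ha := central_inv_assoc HE.
have path1 : ((x * y) * z) * w =
    (x * (y * (z * w))) * (lassoc x y (z * w) * lassoc (x * y) z w).
  by rewrite lassocE (lassocE x y (z * w)) (centralAr mouf (Ha _ _ _)).
have path2 : ((x * y) * z) * w =
    (x * (y * (z * w))) * ((lassoc y z w * lassoc x (y * z) w) * lassoc x y z).
  rewrite (lassocE x y z) (centralAC mouf (Ha x y z)) (lassocE x (y * z) w) (lassocE y z w).
  rewrite -(centralAr mouf (Ha y z w)) (centralAr mouf (Ha x (y * z) w)).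
  by rewrite (centralAr mouf (Ha x y z)).
by apply: (@lmulI _ (x * (y * (z * w)))); rewrite -path1 -path2.
Qed.

Let lassoc_eq_mul1 (a b c a' b' c' : L) :
  lassoc a b c * lassoc a' b' c' = 1 -> lassoc a b c = lassoc a' b' c' :=
  central_inv_eq mouf (central_inv_assoc HE a' b' c').

Lemma lassoc_moufang (x y z : L) : (lassoc y x z * lassoc x (y * x) z) * lassoc x y x = 1.
Proof.
have Ha := central_inv_assoc HE.
have e : ((x * y) * x) * z =
    (x * (y * (x * z))) * ((lassoc y x z * lassoc x (y * x) z) * lassoc x y x).
  rewrite (lassocE x y x) (centralAC mouf (Ha x y x)) (lassocE x (y * x) z) (lassocE y x z).
  rewrite -(centralAr mouf (Ha y x z)) (centralAr mouf (Ha x (y * x) z)).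
  by rewrite (centralAr mouf (Ha x y x)).
by rewrite mouf -{1}[x * (y * (x * z))]lmul1r in e; rewrite (lmulI e).
Qed.

Lemma lassoc_xxy (x y : L) : lassoc x x y = 1.
Proof. by have := mouf x 1 y; rewrite lmul1r lmul1l /lassoc => ->; rewrite lldivv. Qed.

Lemma lassoc_xyx (x y : L) : lassoc x y x = 1.
Proof. by have := mouf x y 1; rewrite !lmul1r /lassoc => ->; rewrite lldivv. Qed.

Lemma lassoc_xyy (x y : L) : lassoc x y y = 1.
Proof. by have := lassoc_moufang y x y; rewrite !lassoc_xyx !lmul1r. Qed.

(* In the names below, [lassoc_absorb_ij] multiplies argument i into argument j. *)
Lemma lassoc_absorb12 (x y z : L) : lassoc x (x * y) z = lassoc x y z.
Proof.
have := lassoc_pentagon x x y z; rewrite !lassoc_xxy.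
rewrite (lassoc_eqmod (eqv_sq x) (eqv_refl y) (eqv_refl z)) lassoc1l !lmul1r.
by move=> /esym/lassoc_eq_mul1->.
Qed.

Lemma lassoc_sym12 (x y z : L) : lassoc y x z = lassoc x y z.
Proof.
have := lassoc_moufang x y z; rewrite lassoc_xyx lmul1r => /lassoc_eq_mul1->.
by rewrite -(lassoc_absorb12 x y z); apply: lassoc_eqmod.
Qed.

Lemma lassoc_absorb32 (x y z : L) : lassoc x (y * z) z = lassoc x y z.
Proof.
have := lassoc_pentagon x y z z.
rewrite (lassoc_eqmod (eqv_refl x) (eqv_refl y) (eqv_sq z)) lassoc1r !lassoc_xyy.
by rewrite !lmul1l => /esym/lassoc_eq_mul1.
Qed.

Lemma lassoc_absorb23 (x y z : L) : lassoc x y (y * z) = lassoc x y z.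
Proof.
have := lassoc_pentagon x y y z.
rewrite (lassoc_eqmod (eqv_refl x) (eqv_sq y) (eqv_refl z)) lassoc1m lassoc_xxy.
rewrite lassoc_xyy !lmul1l => /lassoc_eq_mul1->.
by rewrite lassoc_sym12 (lassoc_eqmod (eqv_refl y) (eqvC x y) (eqv_refl z)) lassoc_absorb12
  lassoc_sym12.
Qed.

Lemma lassoc_absorb21 (x y z : L) : lassoc (x * y) y z = lassoc x y z.
Proof.
rewrite lassoc_sym12 (lassoc_eqmod (eqv_refl y) (eqvC x y) (eqv_refl z)).
by rewrite lassoc_absorb12 lassoc_sym12.
Qed.

Lemma lassoc_absorb13 (x y z : L) : lassoc x y (x * z) = lassoc x y z.
Proof. by rewrite lassoc_sym12 lassoc_absorb23 lassoc_sym12. Qed.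

Lemma lassoc_sym23 (x y z : L) : lassoc x y z = lassoc x z y.
Proof.
rewrite -lassoc_absorb32 -(lassoc_absorb32 x z y).
have yzy_z : eqv ((y * z) * y) z.
  apply: eqv_trans (eqvM (eqvC y z) (eqv_refl y)) _.
  apply: eqv_trans (eqvA _ _ _) _.
  by apply: eqv_trans (eqvM (eqv_refl z) (eqv_sq y)) _; rewrite lmul1r.
rewrite -{1}(lassoc_eqmod (eqv_refl x) (eqv_refl (y * z)) yzy_z) lassoc_absorb23.
exact: lassoc_eqmod.
Qed.

Lemma lassocM1 (x y z w : L) : lassoc (x * y) z w = lassoc x z w * lassoc y z w.
Proof.
have P1 := lassoc_pentagon x y z w.
have P2 : lassoc x y (z * w) * lassoc (x * y) z (y * w) =
    (lassoc y z w * lassoc x (y * z) (y * w)) * lassoc x y z.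
  rewrite -(lassoc_absorb13 y z w) -(lassoc_absorb23 x y (z * w)).
  rewrite (lassoc_eqmod (eqv_refl x) (eqv_refl y) (_ : eqv (y * (z * w)) (z * (y * w)))).
    exact: lassoc_pentagon.
  apply: eqv_trans (eqv_sym (eqvA _ _ _)) _.
  exact: eqv_trans (eqvM (eqvC _ _) (eqv_refl _)) (eqvA _ _ _).
have P3 : lassoc x (y * z) w * lassoc (x * y) z (y * w) =
    (lassoc y z w * lassoc x z w) * lassoc x (y * z) (y * w).
  have := lassoc_pentagon x (y * z) (y * w) z.
  have -> : lassoc x (y * z) ((y * w) * z) = lassoc x (y * z) w.
    rewrite -(lassoc_absorb23 x (y * z) w); apply: lassoc_eqmod; try exact: eqv_refl.
    apply: eqv_trans (eqvA _ _ _) _.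
    exact: eqv_trans (eqvM (eqv_refl _) (eqvC _ _)) (eqv_sym (eqvA _ _ _)).
  have -> : lassoc (x * (y * z)) (y * w) z = lassoc (x * y) z (y * w).
    rewrite lassoc_sym23 -(lassoc_absorb21 (x * y) z (y * w)).
    by apply: lassoc_eqmod; [exact: eqv_sym (eqvA _ _ _) | exact: eqv_refl | exact: eqv_refl].
  have -> : lassoc (y * z) (y * w) z = lassoc y z w.
    by rewrite lassoc_sym23 lassoc_absorb21 lassoc_absorb13.
  have -> // : lassoc x ((y * z) * (y * w)) z = lassoc x z w.
  rewrite (lassoc_sym23 x z w) -(lassoc_absorb32 x w z); apply: lassoc_eqmod; try exact: eqv_refl.
  apply: eqv_trans (eqvM (eqvC _ _) (eqv_refl _)) _.
  apply: eqv_trans (eqvA _ _ _) _.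
  apply: eqv_trans (eqvM (eqv_refl _) (eqv_sym (eqvA _ _ _))) _.
  apply: eqv_trans (eqvM (eqv_refl _) (eqvM (eqv_sq _) (eqv_refl _))) _.
  by rewrite lmul1l; exact: eqvC.
(* In the elementary abelian 2-group of associators, the product of the three
   pentagon instances is the claim. *)
by apply: (lmulI_eq (congr2 lmul (congr2 lmul P1 P2) P3)); central_norm.
Qed.

Lemma lassocM2 (x y z w : L) : lassoc x (y * z) w = lassoc x y w * lassoc x z w.
Proof. by rewrite lassoc_sym12 lassocM1 !(lassoc_sym12 x). Qed.

Lemma lassocM3 (x y z w : L) : lassoc x y (z * w) = lassoc x y z * lassoc x y w.
Proof. by rewrite lassoc_sym23 lassocM2 !(lassoc_sym23 x y). Qed.

Lemma lcommC (x y : L) : lcomm y x = lcomm x y.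
Proof.
apply: (central_inv_eq mouf (central_inv_comm HE x y)).
apply: (@lmulI _ (x * y)); rewrite lmul1r -(centralAr mouf (central_inv_comm HE x y)).
by rewrite -!lcommE.
Qed.

Lemma lcommMl (x y z : L) : lcomm (x * y) z = (lcomm x z * lcomm y z) * lassoc x y z.
Proof.
have Ha := central_inv_assoc HE; have Hc := central_inv_comm HE.
suff -> : lcomm (x * y) z =
    (lcomm x z * lcomm y z) * ((lassoc z x y * lassoc x z y) * lassoc x y z).
  by rewrite (lassoc_sym12 x z y) -(lassoc_sym23 x y z); central_norm.
apply: lldiv_eq.
rewrite (lassocE x y z) (lcommE y z) -(centralAr mouf (Hc y z)).
rewrite (lassocE' x z y) (lcommE x z).
rewrite (centralAC mouf (Hc x z)) (lassocE z x y).
rewrite [in RHS](centralAr mouf (Hc x z)) [in RHS](centralAr mouf (Ha x z y)).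
rewrite [in RHS](centralAr mouf (Hc y z)) [in RHS](centralAr mouf (Ha x y z)).
by congr (_ * _); central_norm.
Qed.

Lemma lsqM (x y : L) : lsq (x * y) = (lsq x * lsq y) * lcomm x y.
Proof.
have Hd : central_inv (((lsq y * lassoc x y y) * lcomm y x) * lassoc y x y).
  by apply: (central_invM mouf (central_invM mouf (central_invM mouf _ _) _) _); central_atom.
have yxy : y * (x * y) = x * (((lsq y * lassoc x y y) * lcomm y x) * lassoc y x y).
  rewrite (lassocE' y x y).
  rewrite (lcommE y x) (centralAC mouf (central_inv_comm HE y x)) (lassocE x y y) -/(lsq y).
  rewrite (centralAr mouf (central_inv_assoc HE x y y)).
  rewrite (centralAr mouf (central_inv_comm HE y x)).
  by rewrite (centralAr mouf (central_inv_assoc HE y x y)).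
rewrite {1}/lsq (lassocE x y (x * y)) yxy -(centralAr mouf Hd) -/(lsq x).
rewrite lassoc_absorb13 !lassoc_xyy lassoc_xyx lcommC.
central_norm.
Qed.

End AssociatorCalculus.

Section JointlyInjective.
Variables (L : loop) (I : Type) (M : I -> loop) (h : forall i, L -> M i).
Hypothesis h_hom : forall i, loop_hom (h i).
Hypothesis h_inj : forall x y, (forall i, h i x = h i y) -> x = y.

Lemma central_inv_jointly (c : L) : (forall i, central_inv (h i c)) -> central_inv c.
Proof.
move=> Hc; split=> [y|y z|]; apply: h_inj => i; rewrite ?h_hom.
- by case: (Hc i).
- by case: (Hc i).
- by rewrite (loop_hom1 (h_hom i)); case: (Hc i).
Qed.

Lemma in_E_jointly_injective : (forall i, in_E (M i)) -> in_E L.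
Proof.
move=> ME; apply: in_E_of_central.
- by move=> x y z; apply: h_inj => i; rewrite !h_hom; exact: E_moufang.
- by move=> x; apply: central_inv_jointly => i; rewrite loop_hom_sq //; exact: central_inv_sq.
- move=> x y; apply: central_inv_jointly => i.
  by rewrite loop_hom_comm //; exact: central_inv_comm.
- move=> x y z; apply: central_inv_jointly => i.
  by rewrite loop_hom_assoc //; exact: central_inv_assoc.
Qed.

End JointlyInjective.

Lemma power_loop_E (M : loop) (I : Type) : in_E M -> in_E (power_loop M I).
Proof.
move=> ME.
apply: (@in_E_jointly_injective _ I (fun=> M) (fun i (x : power_loop M I) => x i)) => //.
exact: functional_extensionality.
Qed.

Section Subloop.
Variables (L : loop) (P : L -> Prop).
Hypothesis P1 : P lone.
Hypothesis PM : forall x y, P x -> P y -> P (lmul x y).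
Hypothesis P_ldiv : forall x y, P x -> P y -> P (lldiv x y).
Hypothesis P_rdiv : forall x y, P x -> P y -> P (lrdiv x y).

Definition sub_carrier := {x : L | P x}.

Definition sub_mul (a b : sub_carrier) : sub_carrier := exist _ _ (PM (svalP a) (svalP b)).
Definition sub_one : sub_carrier := exist _ _ P1.
Definition sub_ldiv (a b : sub_carrier) : sub_carrier :=
  exist _ _ (P_ldiv (svalP a) (svalP b)).
Definition sub_rdiv (a b : sub_carrier) : sub_carrier :=
  exist _ _ (P_rdiv (svalP a) (svalP b)).

Lemma sub_val_inj : injective (@sval L P).
Proof. by move=> [a pa] [b pb] /= e; subst b; rewrite (proof_irrelevance _ pa pb). Qed.

Lemma sub_mul1l x : sub_mul sub_one x = x. Proof. by apply: sub_val_inj; exact: lmul1l. Qed.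
Lemma sub_mul1r x : sub_mul x sub_one = x. Proof. by apply: sub_val_inj; exact: lmul1r. Qed.
Lemma sub_mul_ldiv a b : sub_mul a (sub_ldiv a b) = b.
Proof. by apply: sub_val_inj; exact: lmul_ldiv. Qed.
Lemma sub_ldiv_mul a b : sub_ldiv a (sub_mul a b) = b.
Proof. by apply: sub_val_inj; exact: lldiv_mul. Qed.
Lemma sub_mul_rdiv a b : sub_mul (sub_rdiv b a) a = b.
Proof. by apply: sub_val_inj; exact: lmul_rdiv. Qed.
Lemma sub_rdiv_mul a b : sub_rdiv (sub_mul b a) a = b.
Proof. by apply: sub_val_inj; exact: lrdiv_mul. Qed.

Definition subloop : loop :=
  @Loop sub_carrier sub_mul sub_one sub_ldiv sub_rdiv
    sub_mul1l sub_mul1r sub_mul_ldiv sub_ldiv_mul sub_mul_rdiv sub_rdiv_mul.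

Lemma subloop_E : in_E L -> in_E subloop.
Proof.
move=> LE.
by apply: (@in_E_jointly_injective subloop unit (fun=> L) (fun _ (x : subloop) => sval x))
  => // x y /(_ tt)/sub_val_inj.
Qed.

End Subloop.

Section FreeLoops.
Variables (n : nat) (F : loop) (g : 'I_n -> F).
Hypothesis F_free : free_E_loop g.

Lemma free_E_hom_eq (L : loop) (h1 h2 : F -> L) : in_E L ->
  loop_hom h1 -> loop_hom h2 -> (forall i, h1 (g i) = h2 (g i)) -> forall x, h1 x = h2 x.
Proof.
move=> LE hom1 hom2 e x; have [h [_ [_ h_uniq]]] := F_free.2 L LE (h2 \o g).
by rewrite (h_uniq h1) // (h_uniq h2).
Qed.

(* The subloop defined by [P] receives a homomorphism from [F] which, composed
   with the inclusion, must be the identity. *)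
Lemma free_E_loop_ind (P : F -> Prop) :
  P lone -> (forall i, P (g i)) ->
  (forall x y, P x -> P y -> P (lmul x y)) ->
  (forall x y, P x -> P y -> P (lldiv x y)) ->
  (forall x y, P x -> P y -> P (lrdiv x y)) -> forall x, P x.
Proof.
move=> P1 Pg PM P_ldiv P_rdiv x.
have FE := F_free.1.
have [h [h_hom [hg _]]] :=
  F_free.2 _ (subloop_E P1 PM P_ldiv P_rdiv FE) (fun i => exist _ (g i) (Pg i)).
have -> : x = sval (h x).
  apply: (@free_E_hom_eq _ id (sval \o h)) => // [y z|i] /=; first by rewrite h_hom.
  by rewrite hg.
exact: svalP.
Qed.

End FreeLoops.

(** * Two small E-loops *)

Definition Z2 : loop := @Loop bool addb false addb addb addFb addbF addKb addKb addbK addbK.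

Lemma Z2_E : in_E Z2.
Proof.
have c0 : central_inv (false : Z2) by split=> [[]|[] []|].
by apply: in_E_of_central => [[] [] []|[]|[] []|[] [] []].
Qed.

(* A code loop of order 16: F_2^3 x F_2 with factor set [q16_cocycle].  In it
   [q16_z] is central, [q16_e0], [q16_e1], [q16_e2] associate to [q16_z],
   [q16_e01] and [q16_e2] commute to [q16_z], and [q16_e012] squares to [q16_z]. *)
Definition Q16 := ((bool * bool * bool) * bool)%type.

Definition vadd (u v : bool * bool * bool) : bool * bool * bool :=
  let: (u0, u1, u2) := u in let: (v0, v1, v2) := v in (u0 (+) v0, u1 (+) v1, u2 (+) v2).

Definition q16_cocycle (u v : bool * bool * bool) : bool :=
  let: (u0, u1, u2) := u in let: (v0, v1, v2) := v in
  (u0 && u1 && v2) (+) (u0 && u2 && v1) (+) (u1 && u2 && v0).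

Definition q16_mul (a b : Q16) : Q16 :=
  (vadd a.1 b.1, a.2 (+) b.2 (+) q16_cocycle a.1 b.1).
Definition q16_one : Q16 := ((false, false, false), false).
Definition q16_ldiv (a c : Q16) : Q16 :=
  let w := vadd a.1 c.1 in (w, a.2 (+) c.2 (+) q16_cocycle a.1 w).
Definition q16_rdiv (c b : Q16) : Q16 :=
  let w := vadd c.1 b.1 in (w, c.2 (+) b.2 (+) q16_cocycle w b.1).

Lemma q16_mul1l x : q16_mul q16_one x = x. Proof. by move: x => [[[[] []] []] []]. Qed.
Lemma q16_mul1r x : q16_mul x q16_one = x. Proof. by move: x => [[[[] []] []] []]. Qed.
Lemma q16_mul_ldiv a b : q16_mul a (q16_ldiv a b) = b.
Proof. by move: a b => [[[[] []] []] []] [[[[] []] []] []]. Qed.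
Lemma q16_ldiv_mul a b : q16_ldiv a (q16_mul a b) = b.
Proof. by move: a b => [[[[] []] []] []] [[[[] []] []] []]. Qed.
Lemma q16_mul_rdiv a b : q16_mul (q16_rdiv b a) a = b.
Proof. by move: a b => [[[[] []] []] []] [[[[] []] []] []]. Qed.
Lemma q16_rdiv_mul a b : q16_rdiv (q16_mul b a) a = b.
Proof. by move: a b => [[[[] []] []] []] [[[[] []] []] []]. Qed.

Definition Q16_loop : loop :=
  @Loop Q16 q16_mul q16_one q16_ldiv q16_rdiv
    q16_mul1l q16_mul1r q16_mul_ldiv q16_ldiv_mul q16_mul_rdiv q16_rdiv_mul.

Definition q16_enum : seq Q16 :=
  let bs := [:: false; true] in
  [seq (u, d) | u <- [seq (ab, c) | ab <- [seq (a, b) | a <- bs, b <- bs], c <- bs], d <- bs].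

Lemma forall_q16 (p : Q16 -> bool) : all p q16_enum -> forall x, p x.
Proof. by move/allP=> Hp [[[a b] c] d]; apply: Hp; case: a; case: b; case: c; case: d. Qed.

Lemma forall2_q16 (p : Q16 -> Q16 -> bool) :
  all (fun x => all (p x) q16_enum) q16_enum -> forall x y, p x y.
Proof. by move=> Hp x; apply: forall_q16; move: x; apply: forall_q16 Hp. Qed.

Lemma forall3_q16 (p : Q16 -> Q16 -> Q16 -> bool) :
  all (fun x => all (fun y => all (p x y) q16_enum) q16_enum) q16_enum -> forall x y z, p x y z.
Proof. by move=> Hp x y; apply: forall_q16; move: x y; apply: forall2_q16 Hp. Qed.

Definition q16_z : Q16 := ((false, false, false), true).
Definition q16_e0 : Q16 := ((true, false, false), false).
Definition q16_e1 : Q16 := ((false, true, false), false).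
Definition q16_e2 : Q16 := ((false, false, true), false).
Definition q16_e01 : Q16 := ((true, true, false), false).
Definition q16_e012 : Q16 := ((true, true, true), false).

Definition q16_central (c : Q16) : bool := (c == q16_one) || (c == q16_z).

Lemma q16_central_inv (c : Q16_loop) : q16_central c -> central_inv c.
Proof.
move=> Hc; split=> [y|y z|]; apply/eqP; move: Hc; apply/implyP.
- by move: c y; apply: forall2_q16; vm_compute.
- by move: c y z; apply: forall3_q16; vm_compute.
- by move: c; apply: forall_q16; vm_compute.
Qed.

Lemma Q16_E : in_E Q16_loop.
Proof.
apply: in_E_of_central.
- by move=> x y z; apply/eqP; move: x y z; apply: forall3_q16; vm_compute.
- by move=> x; apply: q16_central_inv; move: x; apply: forall_q16; vm_compute.
- by move=> x y; apply: q16_central_inv; move: x y; apply: forall2_q16; vm_compute.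
- by move=> x y z; apply: q16_central_inv; move: x y z; apply: forall3_q16; vm_compute.
Qed.

Inductive basic := BSq of nat | BComm of nat & nat | BAssoc of nat & nat & nat.

Definition basic_code (b : basic) : nat * nat * nat * nat :=
  match b with
  | BSq i => (0, i, 0, 0)
  | BComm i j => (1, i, j, 0)
  | BAssoc i j k => (2, i, j, k)
  end.

Definition basic_decode (c : nat * nat * nat * nat) : option basic :=
  let: (t, i, j, k) := c in
  match t with 0 => Some (BSq i) | 1 => Some (BComm i j) | 2 => Some (BAssoc i j k) | _ => None end.

Lemma basic_codeK : pcancel basic_code basic_decode. Proof. by case. Qed.

HB.instance Definition _ := Equality.copy basic (pcan_type basic_codeK).

Definition basic_ok (n : nat) (b : basic) : bool :=
  match b with
  | BSq i => i < n
  | BComm i j => i < j < n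
  | BAssoc i j k => [&& i < j, j < k & k < n]
  end.

Section BasicProducts.
Variable L : loop.
Local Notation "x * y" := (@lmul L x y).
Local Notation "1" := (@lone L).

Definition basic_val (f : nat -> L) (b : basic) : L :=
  match b with
  | BSq i => lsq (f i)
  | BComm i j => lcomm (f i) (f j)
  | BAssoc i j k => lassoc (f i) (f j) (f k)
  end.

Definition basic_prod (f : nat -> L) (s : seq basic) : L :=
  foldr (fun b x => basic_val f b * x) 1 s.

Lemma basic_prod_ext n f f' s : (forall i, i < n -> f i = f' i) -> all (basic_ok n) s ->
  basic_prod f s = basic_prod f' s.
Proof.
move=> eq_f; elim: s => [|b s IH] //= /andP[b_ok /IH->]; congr lmul.
by case: b b_ok => [i|i j|i j k] /= ?; rewrite !eq_f //; lia.
Qed.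

Hypothesis LE : in_E L.
Let mouf : moufang L := E_moufang LE.

Lemma central_inv_basic_val f b : central_inv (basic_val f b).
Proof. by case: b => * /=; central_atom. Qed.

Lemma central_inv_basic_prod f s : central_inv (basic_prod f s).
Proof.
elim: s => [|b s IH] /=; first exact: central_inv1.
exact: (central_invM mouf (central_inv_basic_val f b) IH).
Qed.

Lemma basic_prod_cat f s t : basic_prod f (s ++ t) = basic_prod f s * basic_prod f t.
Proof.
elim: s => [|b s IH] /=; first by rewrite lmul1l.
by rewrite IH (centralA (central_inv_basic_val f b)).
Qed.

Lemma basic_prod_rem f s b : b \in s -> basic_prod f s = basic_val f b * basic_prod f (rem b s).
Proof.
elim: s => [|c s IH] //=; rewrite inE; case: (eqVneq b c) => [<- //|neq /= b_s].
have Hb := central_inv_basic_val f b; have Hc := central_inv_basic_val f c.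
have Hs := central_inv_basic_prod f (rem b s).
by rewrite IH //; central_norm.
Qed.

Lemma basic_prod_even f s : (forall b, ~~ odd (count_mem b s)) -> basic_prod f s = 1.
Proof.
elim: {s}(size s) {-2}s (leqnn (size s)) => [|N IH] [|b s] //= size_s even_s.
have b_s : b \in s.
  by rewrite -has_pred1 has_count; move: (even_s b); rewrite /= eqxx; case: count.
rewrite (basic_prod_rem f b_s) -(centralA (central_inv_basic_val f b)).
rewrite (centralK (central_inv_basic_val f b)) lmul1l.
apply: IH => [|c]; first by rewrite size_rem //; move: size_s; case: (size s) => //= m; lia.
rewrite count_mem_rem; move: (even_s c) => /=; case: (eqVneq b c) => [<-|_] /=.
  by rewrite add0n negbK; case: (count_mem b s) => //= m; rewrite subn1.
by rewrite add0n subn0.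
Qed.

Lemma basic_prod_single f s b z : central_inv z ->
  (forall c, c \in s -> basic_val f c = if c == b then z else 1) ->
  basic_prod f s = if odd (count_mem b s) then z else 1.
Proof.
move=> Hz; elim: s => [|c s IH] f_s //=.
rewrite IH => [|d d_s]; last by apply: f_s; rewrite inE d_s orbT.
rewrite f_s ?mem_head //; case: (eqVneq c b) => _ /=; last by rewrite lmul1l.
by case: (odd _); rewrite /= ?(centralK Hz) ?lmul1r.
Qed.

End BasicProducts.

Lemma basic_prod_hom (L L' : loop) (h : L -> L') (f : nat -> L) s :
  loop_hom h -> h (basic_prod f s) = basic_prod (h \o f) s.
Proof.
move=> h_hom; elim: s => [|b s IH] /=; first exact: loop_hom1.
rewrite h_hom IH; congr lmul.
by case: b => *; rewrite /= ?loop_hom_sq ?loop_hom_comm ?loop_hom_assoc.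
Qed.

(** * The free E-loop modulo basic elements *)

Section FreeELoop.
Variables (n : nat) (F : loop) (g : 'I_n -> F).
Hypothesis F_free : free_E_loop g.
Let FE : in_E F := F_free.1.
Let mouf : moufang F := E_moufang FE.
Local Notation "x * y" := (@lmul F x y).
Local Notation "1" := (@lone F).

Definition gen (i : nat) : F := if insub i is Some o then g o else 1.

Lemma gen_ord (o : 'I_n) : gen o = g o.
Proof. by rewrite /gen valK. Qed.

Lemma gen_out i : n <= i -> gen i = 1.
Proof. by move=> le_n_i; rewrite /gen insubF // ltnNge le_n_i. Qed.

Definition spanned (d : F) : Prop := exists2 s, all (basic_ok n) s & d = basic_prod gen s.

Lemma spanned1 : spanned 1.
Proof. by exists [::]. Qed.

Lemma spannedM c d : spanned c -> spanned d -> spanned (c * d).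
Proof.
case=> s s_ok -> [t t_ok ->]; exists (s ++ t); first by rewrite all_cat s_ok.
by rewrite (basic_prod_cat FE).
Qed.

Lemma spanned_central d : spanned d -> central_inv d.
Proof. by case=> s _ ->; apply: central_inv_basic_prod. Qed.

Lemma spanned_basic b : basic_ok n b -> spanned (basic_val gen b).
Proof. by move=> b_ok; exists [:: b]; rewrite /= ?b_ok ?lmul1r. Qed.

Lemma spanned_sq_gen i : spanned (lsq (gen i)).
Proof.
case: (ltnP i n) => [lt_in|/gen_out->]; last by rewrite lsq1; exact: spanned1.
exact: (@spanned_basic (BSq i)).
Qed.

Lemma spanned_comm_gen i j : spanned (lcomm (gen i) (gen j)).
Proof.
wlog lt_ij : i j / i < j.
  move=> W; case: (ltngtP i j) => [lt_ij|lt_ji|<-]; first exact: W.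
    by rewrite (lcommC FE); exact: W.
  by rewrite lcommxx; exact: spanned1.
case: (ltnP j n) => [lt_jn|/gen_out->]; last by rewrite lcomm1r; exact: spanned1.
by apply: (@spanned_basic (BComm i j)); rewrite /= lt_ij.
Qed.

Lemma spanned_assoc_gen i j k : spanned (lassoc (gen i) (gen j) (gen k)).
Proof.
wlog lt_ij : i j k / i < j.
  move=> W; case: (ltngtP i j) => [lt_ij|lt_ji|<-]; first exact: W.
    by rewrite -(lassoc_sym12 FE); exact: W.
  by rewrite (lassoc_xxy FE); exact: spanned1.
wlog lt_jk : i j k lt_ij / j < k.
  move=> W; case: (ltngtP j k) => [lt_jk|lt_kj|<-]; first exact: W.
    rewrite (lassoc_sym23 FE); case: (ltngtP i k) => [lt_ik|lt_ki|<-]; first exact: W.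
      by rewrite -(lassoc_sym12 FE); exact: W.
    by rewrite (lassoc_xxy FE); exact: spanned1.
  by rewrite (lassoc_xyy FE); exact: spanned1.
case: (ltnP k n) => [lt_kn|/gen_out->]; last by rewrite lassoc1r; exact: spanned1.
by apply: (@spanned_basic (BAssoc i j k)); rewrite /= lt_ij lt_jk.
Qed.

(* By induction over [F]; for a division, [y = x (x \ y)] gives
   [phi (x \ y) = phi x phi y d] because central involutions are their own inverses. *)
Lemma spanned_quasi_hom (phi : F -> F) :
  (forall x, central_inv (phi x)) -> spanned (phi 1) -> (forall i, spanned (phi (g i))) ->
  (forall x y, exists2 d, spanned d & phi (x * y) = (phi x * phi y) * d) ->
  forall x, spanned (phi x).
Proof.
move=> phi_central phi1 phi_g phiM; apply: (free_E_loop_ind F_free) => // x y Hx Hy.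
- by have [d Hd ->] := phiM x y; apply: spannedM => //; exact: spannedM.
- have [d Hd] := phiM x (lldiv x y); rewrite lmul_ldiv => e.
  move: (phi_central x) (phi_central y) (phi_central (lldiv x y)) (spanned_central Hd).
  move=> Cx Cy Cxy Cd.
  have -> : phi (lldiv x y) = (phi x * phi y) * d by rewrite e; central_norm.
  by apply: spannedM => //; exact: spannedM.
- have [d Hd] := phiM (lrdiv x y) y; rewrite lmul_rdiv => e.
  move: (phi_central x) (phi_central y) (phi_central (lrdiv x y)) (spanned_central Hd).
  move=> Cx Cy Cxy Cd.
  have -> : phi (lrdiv x y) = (phi x * phi y) * d by rewrite e; central_norm.
  by apply: spannedM => //; exact: spannedM.
Qed.

Lemma spanned_assoc x y z : spanned (lassoc x y z).
Proof.
have assoc_gen_gen j k w : spanned (lassoc w (gen j) (gen k)).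
  move: w; apply: spanned_quasi_hom => [w|||u v]; first exact: central_inv_assoc.
  - by rewrite lassoc1l; exact: spanned1.
  - by move=> i; rewrite -gen_ord; exact: spanned_assoc_gen.
  - by exists 1; [exact: spanned1 | rewrite lmul1r (lassocM1 FE)].
have assoc_any_gen k w : spanned (lassoc x w (gen k)).
  move: w; apply: spanned_quasi_hom => [w|||u v]; first exact: central_inv_assoc.
  - by rewrite lassoc1m; exact: spanned1.
  - by move=> i; rewrite -gen_ord; exact: assoc_gen_gen.
  - by exists 1; [exact: spanned1 | rewrite lmul1r (lassocM2 FE)].
move: z; apply: spanned_quasi_hom => [z|||u v]; first exact: central_inv_assoc.
- by rewrite lassoc1r; exact: spanned1.
- by move=> i; rewrite -gen_ord; exact: assoc_any_gen.
- by exists 1; [exact: spanned1 | rewrite lmul1r (lassocM3 FE)].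
Qed.

Lemma spanned_comm x y : spanned (lcomm x y).
Proof.
have comm_gen j w : spanned (lcomm w (gen j)).
  move: w; apply: spanned_quasi_hom => [w|||u v]; first exact: central_inv_comm.
  - by rewrite lcomm1l; exact: spanned1.
  - by move=> i; rewrite -gen_ord; exact: spanned_comm_gen.
  - by exists (lassoc u v (gen j)); [exact: spanned_assoc | exact: lcommMl].
move: y; apply: spanned_quasi_hom => [y|||u v]; first exact: central_inv_comm.
- by rewrite lcomm1r; exact: spanned1.
- by move=> i; rewrite -gen_ord; exact: comm_gen.
- exists (lassoc u v x); first exact: spanned_assoc.
  by rewrite (lcommC FE) (lcommMl FE) (lcommC FE u) (lcommC FE v).
Qed.

Lemma spanned_sq x : spanned (lsq x).
Proof.
move: x; apply: spanned_quasi_hom => [x|||u v]; first exact: central_inv_sq.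
- by rewrite lsq1; exact: spanned1.
- by move=> i; rewrite -gen_ord; exact: spanned_sq_gen.
- by exists (lcomm u v); [exact: spanned_comm | exact: lsqM].
Qed.

Local Notation eqs := (eqmod spanned).

Let eqs_refl : forall x, eqs x x := eqmod_refl spanned1.
Let eqs_sym : forall x y, eqs x y -> eqs y x := eqmod_sym mouf spanned_central.
Let eqs_trans : forall x y z, eqs x y -> eqs y z -> eqs x z :=
  eqmod_trans mouf spannedM spanned_central.
Let eqsM : forall x x' y y', eqs x x' -> eqs y y' -> eqs (x * y) (x' * y') :=
  eqmodM mouf spannedM spanned_central.
Let eqsA : forall x y z, eqs ((x * y) * z) (x * (y * z)) := eqmodA spanned_assoc.
Let eqs_sq : forall x, eqs (x * x) 1 := eqmod_sq spanned_sq.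
Let eqs_mulAC : forall x y z, eqs ((x * y) * z) ((x * z) * y) :=
  eqmod_mulAC mouf spanned1 spannedM spanned_central spanned_comm spanned_assoc.
Let eqs_mul_common : forall x y z, eqs ((x * z) * (y * z)) (x * y) :=
  eqmod_mul_common mouf spanned1 spannedM spanned_central spanned_comm spanned_assoc spanned_sq.

Fixpoint gen_prod (b : nat -> bool) (k : nat) : F :=
  if k is k'.+1 then (if b k' then gen_prod b k' * gen k' else gen_prod b k') else 1.

Lemma eq_gen_prod b c k : b =1 c -> gen_prod b k = gen_prod c k.
Proof. by move=> eq_bc; elim: k => [|k IH] //=; rewrite eq_bc IH. Qed.

Lemma gen_prod0 k : gen_prod (fun=> false) k = 1.
Proof. by elim: k. Qed.

Lemma gen_prod1 i k : gen_prod (eq_op^~ i) k = if i < k then gen i else 1.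
Proof.
elim: k => [|k IH] //=; rewrite IH ltnS [i <= k]leq_eqVlt eq_sym.
by case: (eqVneq k i) => [->|]; rewrite ?ltnn ?lmul1l.
Qed.

Lemma gen_prod_addb b c k : eqs (gen_prod (fun m => b m (+) c m) k) (gen_prod b k * gen_prod c k).
Proof.
elim: k => [|k IH] /=; first by rewrite lmul1l.
case: (b k); case: (c k) => /=.
- exact: eqs_trans IH (eqs_sym (eqs_mul_common _ _ _)).
- exact: eqs_trans (eqsM IH (eqs_refl _)) (eqs_mulAC _ _ _).
- exact: eqs_trans (eqsM IH (eqs_refl _)) (eqsA _ _ _).
- exact: IH.
Qed.

Lemma eqs_ldiv x y : eqs (lldiv x y) (x * y).
Proof.
rewrite -{2}(lmul_ldiv x y); apply: eqs_sym.
apply: eqs_trans (eqs_sym (eqsA _ _ _)) _.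
by apply: eqs_trans (eqsM (eqs_sq x) (eqs_refl _)) _; rewrite lmul1l; apply: eqs_refl.
Qed.

Lemma eqs_rdiv x y : eqs (lrdiv x y) (x * y).
Proof.
rewrite -{2}(lmul_rdiv y x); apply: eqs_sym.
apply: eqs_trans (eqsA _ _ _) _.
by apply: eqs_trans (eqsM (eqs_refl _) (eqs_sq y)) _; rewrite lmul1r; apply: eqs_refl.
Qed.

Section Abelianization.
Variable ab : F -> power_loop Z2 'I_n.
Hypothesis ab_hom : loop_hom ab.
Hypothesis ab_g : forall i, ab (g i) = eq_op i.

Definition bits (x : F) (m : nat) : bool := if insub m is Some o then ab x o else false.

Lemma bitsM x y m : bits (x * y) m = bits x m (+) bits y m.
Proof. by rewrite /bits ab_hom; case: insubP. Qed.

Lemma bits_ldiv x y m : bits (lldiv x y) m = bits x m (+) bits y m.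
Proof. by rewrite /bits (loop_hom_ldiv ab_hom); case: insubP. Qed.

Lemma bits_rdiv x y m : bits (lrdiv x y) m = bits x m (+) bits y m.
Proof. by rewrite /bits (loop_hom_rdiv ab_hom); case: insubP. Qed.

Lemma bits1 m : bits 1 m = false.
Proof. by rewrite /bits (loop_hom1 ab_hom); case: insubP. Qed.

Lemma bits_g i m : bits (g i) m = (m == i).
Proof.
rewrite /bits ab_g; case: insubP => [o _ <-|]; first by rewrite eq_sym.
by move=> m_out; apply/esym/eqP => m_i; rewrite m_i ltn_ord in m_out.
Qed.

Lemma eqs_gen_prod_bits x : eqs x (gen_prod (bits x) n).
Proof.
elim/(free_E_loop_ind F_free): x => [|i|x y Hx Hy|x y Hx Hy|x y Hx Hy].
- by rewrite (eq_gen_prod _ bits1) gen_prod0.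
- by rewrite (eq_gen_prod _ (bits_g i)) gen_prod1 ltn_ord gen_ord.
- rewrite (eq_gen_prod _ (bitsM x y)).
  exact: eqs_trans (eqsM Hx Hy) (eqs_sym (gen_prod_addb _ _ _)).
- rewrite (eq_gen_prod _ (bits_ldiv x y)).
  exact: eqs_trans (eqs_ldiv x y) (eqs_trans (eqsM Hx Hy) (eqs_sym (gen_prod_addb _ _ _))).
- rewrite (eq_gen_prod _ (bits_rdiv x y)).
  exact: eqs_trans (eqs_rdiv x y) (eqs_trans (eqsM Hx Hy) (eqs_sym (gen_prod_addb _ _ _))).
Qed.

Lemma spanned_abelian_kernel x : (forall o, ab x o = false) -> spanned x.
Proof.
move=> ab_x; have [d Hd] := eqs_gen_prod_bits x.
rewrite (@eq_gen_prod _ (fun=> false)) ?gen_prod0 ?lmul1l => [->//|m].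
by rewrite /bits; case: insubP => // o _ _; rewrite ab_x.
Qed.

End Abelianization.

End FreeELoop.

(** * Separation by homomorphisms to M3 *)

Definition assign3 (L : loop) (i j k : nat) (a0 a1 a2 : L) (m : nat) : L :=
  if m == i then a0 else if m == j then a1 else if m == k then a2 else lone.

Lemma assign3_hom (L L' : loop) (h : L -> L') i j k a0 a1 a2 m : loop_hom h ->
  h (assign3 i j k a0 a1 a2 m) = assign3 i j k (h a0) (h a1) (h a2) m.
Proof. by move=> h_hom; rewrite /assign3; do 3!case: ifP => _ //; exact: loop_hom1. Qed.

Definition q16_test (b : basic) : nat -> Q16_loop :=
  match b with
  | BSq i => @assign3 Q16_loop i i i q16_e012 q16_one q16_one
  | BComm i j => @assign3 Q16_loop i j j q16_e01 q16_e2 q16_one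
  | BAssoc i j k => @assign3 Q16_loop i j k q16_e0 q16_e1 q16_e2
  end.

Lemma q16_test_basic n b c : basic_ok n b -> basic_ok n c ->
  basic_val (q16_test b) c = if c == b then q16_z else q16_one.
Proof.
case: (eqVneq c b) => [->|neq_cb].
  by case: b => [i|i j|i j k] /= b_ok; rewrite /assign3 !eqxx;
    repeat (case: eqP => ?; subst); by [vm_compute | lia].
case: b neq_cb => [i|i j|i j k]; case: c => [p|p q|p q r] /= neq_cb b_ok c_ok;
  rewrite /assign3; repeat (case: eqP => ?; subst); by [vm_compute | lia | rewrite eqxx in neq_cb].
Qed.

Section SeparationByM3.
Variables (n : nat) (F : loop) (g : 'I_n -> F).
Hypothesis F_free : free_E_loop g.
Variables (M3 : loop) (g3 : 'I_3 -> M3).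
Hypothesis M3_free : free_E_loop g3.
Variable x : F.
Hypothesis x_killed : forall psi : F -> M3, loop_hom psi -> psi x = lone.

(* A homomorphism taking at most three nontrivial values on the generators
   factors through [M3]. *)
Lemma killed_by_assign3 (L : loop) (h : F -> L) i j k a0 a1 a2 : in_E L -> loop_hom h ->
  (forall o, h (g o) = assign3 i j k a0 a1 a2 o) -> h x = lone.
Proof.
move=> LE h_hom h_g.
have [psi [psi_hom [psi_g _]]] := F_free.2 M3 M3_free.1
  (fun o => assign3 i j k (g3 (Ordinal (isT : 0 < 3))) (g3 (Ordinal (isT : 1 < 3)))
                         (g3 (Ordinal (isT : 2 < 3))) o).
have [th [th_hom [th_g _]]] := M3_free.2 L LE (fun t => assign3 0 1 2 a0 a1 a2 t).
have -> : h x = th (psi x).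
  apply: (free_E_hom_eq F_free LE h_hom (loop_hom_comp psi_hom th_hom)) => o /=.
  by rewrite h_g psi_g assign3_hom // !th_g.
by rewrite x_killed // (loop_hom1 th_hom).
Qed.

Lemma killed_basic_prod_even s : all (basic_ok n) s -> x = basic_prod (gen g) s ->
  forall b, ~~ odd (count_mem b s).
Proof.
move=> s_ok x_s b; apply/negP => b_odd.
have b_s : b \in s by rewrite -has_pred1 has_count; case: (count_mem b s) b_odd.
have [kap [kap_hom [kap_g _]]] := F_free.2 _ Q16_E (fun o => q16_test b o).
have : kap x = lone.
  by case: b {b_s b_odd} kap_g => [i|i j|i j k] /= kap_g;
    apply: (killed_by_assign3 Q16_E kap_hom kap_g).
rewrite x_s basic_prod_hom // (basic_prod_ext (f' := q16_test b) _ s_ok) => [|m lt_mn].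
  rewrite (@basic_prod_single Q16_loop _ _ b q16_z) ?b_odd // => [|c c_s].
    exact: q16_central_inv.
  exact: q16_test_basic (allP s_ok _ b_s) (allP s_ok _ c_s).
by rewrite /= -[m]/(val (Ordinal lt_mn)) gen_ord kap_g.
Qed.

Lemma separated_by_M3 : x = lone.
Proof.
have [ab [ab_hom [ab_g _]]] := F_free.2 _ (power_loop_E 'I_n Z2_E) eq_op.
have ab_x o : ab x o = false.
  apply: (@killed_by_assign3 Z2 (fun y => ab y o) o o o true false false Z2_E).
    by move=> y z; rewrite ab_hom.
  by move=> i; rewrite ab_g /assign3 -val_eqE; case: (_ == _).
have [s s_ok x_s] := spanned_abelian_kernel F_free ab_hom ab_g ab_x.
by rewrite x_s (basic_prod_even F_free.1) // => b; exact: killed_basic_prod_even.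
Qed.

End SeparationByM3.

Theorem lemma4p1 (n : nat) (Hn : 3 <= n)
  (F : loop) (g : 'I_n -> F) (HF : free_E_loop g)
  (M3 : loop) (g3 : 'I_3 -> M3) (HM : free_E_loop g3) :
  exists (I : Type) (h : F -> power_loop M3 I),
    loop_hom h /\ injective h.
Proof.
exists {psi : F -> M3 | loop_hom psi}, (fun x psi => sval psi x); split.
  by move=> x y; apply: functional_extensionality => -[psi psi_hom].
move=> x y hxy; suff xy1 : lldiv x y = lone by rewrite -(lmul_ldiv x y) xy1 lmul1r.
apply: (separated_by_M3 HF HM) => psi psi_hom.
rewrite (loop_hom_ldiv psi_hom).
by have /= -> := congr1 (fun f => f (exist _ psi psi_hom)) hxy; rewrite lldivv.
Qed.
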